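(* With the notation of the context, let $0\le\lambda_{k-1}<\lambda_k\le1$, and let $x$ solve $\frac{dx}{d\lambda}=A(\lambda)x+b(\lambda)$ on $[\lambda_{k-1},\lambda_k]$. Set $s_{i,k}=\sqrt{1+\lambda_k\alpha_i}$, $s_{i,k-1}=\sqrt{1+\lambda_{k-1}\alpha_i}$. Then $$x(\lambda_k)=\big(I+E\,\Omega_k F^\top\big)x(\lambda_{k-1})+E\,c_k,$$ where $\Omega_k=\mathrm{diag}(\Omega_{ii,k})$ with $\Omega_{ii,k}=\dfrac{s_{i,k-1}/s_{i,k}-1}{\alpha_i}$, and $c_k\in\mathbb{R}^{n_z}$ has entries $$c_{i,k}=\frac{\alpha_i\tilde z_i\,(\lambda_k s_{i,k-1}-\lambda_{k-1}s_{i,k})+\tilde x_i\,(s_{i,k-1}-s_{i,k})}{\alpha_i\,s_{i,k}^2\,s_{i,k-1}}.$$ In particular $I+E\Omega_kF^\top=\exp\!\big(\int_{\lambda_{k-1}}^{\lambda_k}A(\mu)\,d\mu\big)$.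
   Context: $P\in\mathbb{R}^{n_x\times n_x}$, $R\in\mathbb{R}^{n_z\times n_z}$ symmetric positive definite, $H\in\mathbb{R}^{n_z\times n_x}$ of full row rank (held fixed over the interval), $\bar x\in\mathbb{R}^{n_x}$, $z\in\mathbb{R}^{n_z}$. $R^{-1/2}$ is the inverse of the symmetric positive definite square root of $R$. $A(\lambda)=-\tfrac12 PH^\top(\lambda HPH^\top+R)^{-1}H$, $b(\lambda)=(I+2\lambda A(\lambda))\big[(I+\lambda A(\lambda))PH^\top R^{-1}z+A(\lambda)\bar x\big]$. Let $D=R^{-1/2}HPH^\top R^{-1/2}=V\Lambda V^\top$ with $V$ orthogonal, $\Lambda=\mathrm{diag}(\alpha_1,\dots,\alpha_{n_z})$, $\alpha_i>0$; $E=PH^\top R^{-1/2}V$, $F^\top=V^\top R^{-1/2}H$, $\tilde z=V^\top R^{-1/2}z$, $\tilde x=F^\top\bar x$. *)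

From HB Require Import structures.
From mathcomp Require Import all_boot all_order all_algebra.
From mathcomp Require Import all_classical all_reals all_analysis.
Set Implicit Arguments. Unset Strict Implicit. Unset Printing Implicit Defensive.
Import Order.TTheory GRing.Theory Num.Theory.
Import numFieldNormedType.Exports.
Local Open Scope classical_set_scope.
Local Open Scope ring_scope.

Definition spd (R : realType) (n : nat) (M : 'M[R]_n) : Prop :=
  M^T = M /\ forall v : 'cV[R]_n, v != 0 -> 0 < (v^T *m M *m v) 0 0.

Definition Amat (R : realType) (nx nz : nat) (P : 'M[R]_nx) (Rm : 'M[R]_nz)
  (H : 'M[R]_(nz, nx)) (l : R) : 'M[R]_nx :=
  (- (2%:R)^-1) *: (P *m H^T *m invmx (l *: (H *m P *m H^T) + Rm) *m H).

Definition bvec (R : realType) (nx nz : nat) (P : 'M[R]_nx) (Rm : 'M[R]_nz)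
  (H : 'M[R]_(nz, nx)) (xbar : 'cV[R]_nx) (z : 'cV[R]_nz) (l : R) : 'cV[R]_nx :=
  let A := Amat P Rm H l in
  (1%:M + (2 * l) *: A) *m
    ((1%:M + l *: A) *m (P *m H^T *m invmx Rm *m z) + A *m xbar).

Definition mxRintegral (R : realType) (m n : nat) (f : R -> 'M[R]_(m, n)) (a b : R)
  : 'M[R]_(m, n) :=
  \matrix_(i, j) Rintegral lebesgue_measure `[a, b] (fun t => f t i j).

Definition expm (R : realType) (n : nat) (M : 'M[R]_n) : 'M[R]_n :=
  \matrix_(i, j) limn (series (fun k : nat => ((k`!%:R)^-1 *: M ^+ k) i j)).

From HB Require Import structures.
From mathcomp Require Import all_boot all_order all_algebra.
From mathcomp Require Import all_classical all_reals all_analysis.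
From mathcomp Require Import ring lra.
Import Order.TTheory GRing.Theory Num.Theory.
Import numFieldNormedType.Exports.
Local Open Scope classical_set_scope.
Local Open Scope ring_scope.

Set Implicit Arguments. Unset Strict Implicit. Unset Printing Implicit Defensive.

(* Whitening by R^{-1/2} and rotating by V diagonalises the flow: with
   D(t) = diag(-1 / (2 (1 + t alpha_i))) we have A(t) = E D(t) F^T and F^T E = Lambda,
   and b(t) = E g(t, F^T x) for a vector field g acting coordinatewise.  Hence
   y = F^T x solves the decoupled scalar linear equations y_i' = alpha_i g_i(t, y_i),
   for which sqrt(1 + t alpha_i) is an integrating factor; this gives y(l1) in closed
   form.  Since x' = E g and y' = Lambda g, the vector x - E Lambda^{-1} y is constant,
   which carries the closed form back to x.  For the exponential, the integral of A is
   E diag(beta) F^T with exp(alpha_i beta_i) = s_{i,k-1} / s_{i,k}, and the powers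
   (E diag(beta) F^T)^(k+1) = E diag(beta (alpha beta)^k) F^T make the exponential series
   collapse to I + E diag((exp(alpha beta) - 1) / alpha) F^T. *)

Section ScalarFlow.
Variable R : realType.
Implicit Types a t y Z X K : R.

Definition flow_sqrt a t := Num.sqrt (1 + t * a).
Definition flow_rate a t := - 2^-1 * (1 + t * a)^-1.
Definition flow_field a t y Z X :=
  let m := flow_rate a t in
  m * y + (1 + 2 * t * (m * a)) * ((1 + t * (m * a)) * Z + m * X).

(* The solutions of [y' = a * flow_field a t y Z X]: a particular solution plus
   K times the homogeneous one [1 / flow_sqrt a t]. *)
Definition flow_sol a Z X K t := Z + K / flow_sqrt a t + (X - Z) / (1 + t * a).

Definition flow_gain a l0 l1 Z X :=
  (a * Z * (l1 * flow_sqrt a l0 - l0 * flow_sqrt a l1)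
   + X * (flow_sqrt a l0 - flow_sqrt a l1))
  / (a * flow_sqrt a l1 ^+ 2 * flow_sqrt a l0).

Lemma flow_positive a l0 l1 : 0 < a -> 0 <= l0 -> {in `[l0, l1], forall t, 0 < 1 + t * a}.
Proof.
move=> a_gt0 l0_ge0 t; rewrite in_itv /= => /andP [l0t _].
have := mulr_ge0 (le_trans l0_ge0 l0t) (ltW a_gt0).
lra.
Qed.

Lemma flow_sqrt_gt0 a t : 0 < 1 + t * a -> 0 < flow_sqrt a t.
Proof. by move=> q_gt0; rewrite sqrtr_gt0. Qed.

Lemma sqr_flow_sqrt a t : 0 < 1 + t * a -> flow_sqrt a t ^+ 2 = 1 + t * a.
Proof. by move=> q_gt0; rewrite sqr_sqrtr ?ltW. Qed.

Lemma flow_field_sub a t y u Z X :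
  flow_field a t y Z X - flow_field a t u Z X = flow_rate a t * (y - u).
Proof. by rewrite /flow_field; ring. Qed.

Lemma is_derive_affine b a t : is_derive t 1 (fun s => b + s * a) a.
Proof. by apply: is_derive_eq; rewrite add0r mul1r scaler0 add0r [LHS]mulr1. Qed.

Lemma is_derive_flow_sqrt a t : 0 < 1 + t * a ->
  is_derive t 1 (flow_sqrt a) (a / (2 * flow_sqrt a t)).
Proof.
move=> q_gt0.
have := is_derive1_comp (g := fun s => 1 + s * a) (is_derive1_sqrt q_gt0)
  (is_derive_affine 1 a t).
by rewrite mulrC.
Qed.

(* In the derivative computations below, the [is_derive] facts and the nonvanishing
   denominators in the context are found by the instance search of [is_derive_eq]. *)
Lemma is_derive_flow_sol a Z X K t : a != 0 -> 0 < 1 + t * a ->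
  is_derive t 1 (flow_sol a Z X K) (a * flow_field a t (flow_sol a Z X K t) Z X).
Proof.
move=> a_neq0 q_gt0; have ds := is_derive_flow_sqrt q_gt0.
have s_neq0 : flow_sqrt a t != 0 by rewrite gt_eqF ?flow_sqrt_gt0.
have q_neq0 : 1 + t * a != 0 by rewrite gt_eqF.
apply: is_derive_eq; rewrite /flow_sol /flow_field /flow_rate.
move: s_neq0 (sqr_flow_sqrt q_gt0); set S := flow_sqrt a t => S_neq0 SE.
clearbody S; rewrite -SE.
have -> : t = (S ^+ 2 - 1) / a by rewrite SE addrC addKr mulfK.
rewrite scaler0 add0r mul1r /GRing.scale /=.
by field; rewrite S_neq0.
Qed.

Lemma is_derive_0_itv_eq (f : R -> R) l0 l1 : l0 < l1 ->
  {in `]l0, l1[, forall t, is_derive t 1 f 0} -> {within `[l0, l1], continuous f} ->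
  f l1 = f l0.
Proof.
move=> l01 f'0 f_cont; have [c _] := MVT l01 f'0 f_cont.
by rewrite mul0r => /eqP; rewrite subr_eq0 => /eqP.
Qed.

Lemma flow_ode_uniq a Z X l0 l1 (y u : R -> R) : l0 < l1 ->
  {in `[l0, l1], forall t, 0 < 1 + t * a} ->
  {within `[l0, l1], continuous y} -> {within `[l0, l1], continuous u} ->
  {in `]l0, l1[, forall t, is_derive t 1 y (a * flow_field a t (y t) Z X)} ->
  {in `]l0, l1[, forall t, is_derive t 1 u (a * flow_field a t (u t) Z X)} ->
  y l0 = u l0 -> y l1 = u l1.
Proof.
move=> l01 q_gt0 y_cont u_cont y' u' yu0.
have q1_gt0 : 0 < 1 + l1 * a by apply: q_gt0; rewrite bound_itvE; exact: ltW.
pose phi t := flow_sqrt a t * (y t - u t).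
have s_cont : {within `[l0, l1], continuous (flow_sqrt a)}.
  apply: derivable_within_continuous => t /q_gt0 qt_gt0.
  by have [] := is_derive_flow_sqrt qt_gt0.
have : phi l1 = phi l0.
  apply: is_derive_0_itv_eq => // [t t_in|].
    have qt_gt0 : 0 < 1 + t * a by apply: q_gt0; apply: subset_itv_oo_cc.
    have ds := is_derive_flow_sqrt qt_gt0.
    have dy := y' t t_in; have du := u' t t_in.
    apply: is_derive_eq; rewrite /GRing.scale /= -mulrBr flow_field_sub /flow_rate.
    rewrite -(sqr_flow_sqrt qt_gt0).
    have := flow_sqrt_gt0 qt_gt0; set S := flow_sqrt a t => S_gt0.
    by field; rewrite gt_eqF.
  move=> t; apply: continuousM; first exact: s_cont.
  by apply: continuousB; [exact: y_cont | exact: u_cont].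
rewrite /phi yu0 subrr mulr0 => /eqP.
by rewrite mulf_eq0 subr_eq0 gt_eqF ?flow_sqrt_gt0 //= => /eqP.
Qed.

Lemma flow_ode_endpoint a Z X l0 l1 (y : R -> R) : a != 0 -> l0 < l1 ->
  {in `[l0, l1], forall t, 0 < 1 + t * a} ->
  {within `[l0, l1], continuous y} ->
  {in `]l0, l1[, forall t, is_derive t 1 y (a * flow_field a t (y t) Z X)} ->
  y l1 = flow_sqrt a l0 / flow_sqrt a l1 * y l0 + a * flow_gain a l0 l1 Z X.
Proof.
move=> a_neq0 l01 q_gt0 y_cont y'.
have q0_gt0 : 0 < 1 + l0 * a by apply: q_gt0; rewrite bound_itvE; exact: ltW.
have q1_gt0 : 0 < 1 + l1 * a by apply: q_gt0; rewrite bound_itvE; exact: ltW.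
pose K := flow_sqrt a l0 * (y l0 - Z) - (X - Z) / flow_sqrt a l0.
have sol' t : 0 < 1 + t * a -> is_derive t 1 (flow_sol a Z X K) _ :=
  is_derive_flow_sol Z X K a_neq0.
rewrite (flow_ode_uniq l01 q_gt0 y_cont _ y' (u := flow_sol a Z X K)).
- rewrite /flow_sol /flow_gain /K; move: (y l0) => y0.
  move: (flow_sqrt_gt0 q0_gt0) (sqr_flow_sqrt q0_gt0).
  move: (flow_sqrt_gt0 q1_gt0) (sqr_flow_sqrt q1_gt0).
  set s0 := flow_sqrt a l0; set s1 := flow_sqrt a l1 => s1_gt0 E1 s0_gt0 E0.
  clearbody s0 s1; rewrite -E1.
  have -> : l0 = (s0 ^+ 2 - 1) / a by rewrite E0 addrC addKr mulfK.
  have -> : l1 = (s1 ^+ 2 - 1) / a by rewrite E1 addrC addKr mulfK.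
  by field; rewrite a_neq0 !gt_eqF.
- apply: derivable_within_continuous => t /q_gt0 qt_gt0.
  by have [] := sol' t qt_gt0.
- by move=> t /subset_itv_oo_cc /q_gt0 /sol'.
- rewrite /flow_sol /K -(sqr_flow_sqrt q0_gt0).
  by field; rewrite gt_eqF ?flow_sqrt_gt0.
Qed.

End ScalarFlow.

Section FlowRateIntegral.
Variables (R : realType) (a l0 l1 : R).
Hypotheses (a_neq0 : a != 0) (l01 : l0 < l1).
Hypothesis q_gt0 : {in `[l0, l1], forall t, 0 < 1 + t * a}.

Let q0_gt0 : 0 < 1 + l0 * a.
Proof. by apply: q_gt0; rewrite bound_itvE; exact: ltW. Qed.

Let q1_gt0 : 0 < 1 + l1 * a.
Proof. by apply: q_gt0; rewrite bound_itvE; exact: ltW. Qed.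

Lemma continuous_flow_rate : {within `[l0, l1], continuous (flow_rate a)}.
Proof.
apply: derivable_within_continuous => t /q_gt0 /lt0r_neq0 qt_neq0.
by apply: ex_derive; apply: is_derive_eq.
Qed.

Lemma is_derive_ln_flow_sqrt t : 0 < 1 + t * a ->
  is_derive t 1 (fun s => - ln (flow_sqrt a s) / a) (flow_rate a t).
Proof.
move=> qt_gt0; have s_gt0 := flow_sqrt_gt0 qt_gt0.
have dl := is_derive1_comp (is_derive1_ln s_gt0) (is_derive_flow_sqrt qt_gt0).
apply: is_derive_eq; rewrite /GRing.scale /= /flow_rate -(sqr_flow_sqrt qt_gt0).
by field; rewrite a_neq0 gt_eqF.
Qed.

Lemma flow_rate_integral :
  \int[lebesgue_measure]_(t in `[l0, l1]) flow_rate a t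
  = (ln (flow_sqrt a l0) - ln (flow_sqrt a l1)) / a.
Proof.
pose F t := - ln (flow_sqrt a t) / a.
have F' t : 0 < 1 + t * a -> is_derive t 1 F (flow_rate a t) := @is_derive_ln_flow_sqrt t.
rewrite /Rintegral (continuous_FTC2 (F := F) l01 continuous_flow_rate).
- by rewrite -EFinB /= /F; field.
- split => [t /subset_itv_oo_cc /q_gt0 /F' []//||].
  + apply/cvg_at_right_filter/differentiable_continuous; rewrite -derivable1_diffP.
    by have [] := F' l0 q0_gt0.
  + apply/cvg_at_left_filter/differentiable_continuous; rewrite -derivable1_diffP.
    by have [] := F' l1 q1_gt0.
- by move=> t /subset_itv_oo_cc /q_gt0 /F' dF; rewrite derive1E derive_val.
Qed.

Lemma expR_flow_rate_integral :
  expR (a * \int[lebesgue_measure]_(t in `[l0, l1]) flow_rate a t)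
  = flow_sqrt a l0 / flow_sqrt a l1.
Proof.
rewrite flow_rate_integral mulrC mulfVK // expRB !lnK //.
all: by rewrite posrE flow_sqrt_gt0.
Qed.

End FlowRateIntegral.

Lemma Rintegral_sum d (T : measurableType d) (R : realType)
    (mu : {measure set T -> \bar R}) (D : set T) (I : Type) (s : seq I) (f : I -> T -> R) :
  measurable D -> (forall i, mu.-integrable D (EFin \o f i)) ->
  \int[mu]_(x in D) (\sum_(i <- s) f i x) = \sum_(i <- s) \int[mu]_(x in D) f i x.
Proof.
move=> mD f_int; elim: s => [|i s IHs].
  by under eq_Rintegral do rewrite big_nil; rewrite big_nil Rintegral_cst // mul0r.
under eq_Rintegral do rewrite big_cons.
rewrite big_cons RintegralD ?IHs //.
have := integrable_sum mD s (P := xpredT) (fun i _ => f_int i).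
by apply: eq_integrable => // x _; rewrite /= sumEFin.
Qed.

Section LowRank.
Variables (R : realType) (nx nz : nat) (E : 'M[R]_(nx, nz)) (Ft : 'M[R]_(nz, nx)).

Lemma mul_diag_mx_mxE (d : 'rV[R]_nz) i j :
  (E *m diag_mx d *m Ft) i j = \sum_l E i l * d 0 l * Ft l j.
Proof. by rewrite mxE; apply: eq_bigr => l _; rewrite mul_mx_diag mxE. Qed.

Variable alpha : 'rV[R]_nz.
Hypothesis FtE : Ft *m E = diag_mx alpha.

Lemma lowrank_exprS (beta : 'rV[R]_nz) k :
  (E *m diag_mx beta *m Ft) ^+ k.+1 =
  E *m diag_mx (\row_l (beta 0 l * (alpha 0 l * beta 0 l) ^+ k)) *m Ft.
Proof.
elim: k => [|k IHk].
  by rewrite expr1; congr (_ *m diag_mx _ *m _); apply/rowP => l; rewrite mxE mulr1.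
rewrite exprSr IHk -[_ * _]/(_ *m _) -!mulmxA (mulmxA Ft) FtE !mulmxA.
rewrite -(mulmxA E) !mulmx_diag -(mulmxA E) mulmx_diag.
by congr (_ *m diag_mx _ *m _); apply/rowP => l; rewrite !mxE exprSr; ring.
Qed.

Hypothesis alpha_neq0 : forall l, alpha 0 l != 0.

Lemma lowrank_exp_series (beta : 'rV[R]_nz) n :
  series (fun k => k`!%:R^-1 *: (E *m diag_mx beta *m Ft) ^+ k) n.+1 =
  1%:M + E *m diag_mx (\row_l
    ((series (exp_coeff (alpha 0 l * beta 0 l)) n.+1 - 1) / alpha 0 l)) *m Ft.
Proof.
rewrite /series /= big_nat_recl // fact0 invr1 scale1r expr0; congr (_ + _).
apply/matrixP => i j; rewrite summxE mul_diag_mx_mxE.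
under eq_bigr do rewrite mxE lowrank_exprS mul_diag_mx_mxE mulr_sumr.
rewrite exchange_big /=; apply: eq_bigr => l _.
rewrite mxE big_nat_recl // exp_coeffE /= fact0 invr1 expr0 mul1r addrAC subrr add0r.
rewrite mulr_suml mulr_sumr mulr_suml; apply: eq_bigr => k _.
rewrite mxE exprS; field.
by rewrite alpha_neq0 pnatr_eq0 -lt0n fact_gt0.
Qed.

Lemma expm_lowrank (beta : 'rV[R]_nz) :
  expm (E *m diag_mx beta *m Ft) =
  1%:M + E *m diag_mx (\row_l ((expR (alpha 0 l * beta 0 l) - 1) / alpha 0 l)) *m Ft.
Proof.
apply/matrixP => i j; pose c l := E i l * Ft l j / alpha 0 l.
have -> : (1%:M + E *m diag_mx (\row_l ((expR (alpha 0 l * beta 0 l) - 1) / alpha 0 l))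
            *m Ft) i j = 1%:M i j + \sum_l c l * (expR (alpha 0 l * beta 0 l) - 1).
  by rewrite mxE mul_diag_mx_mxE; congr (_ + _); apply: eq_bigr => l _; rewrite mxE /c; ring.
rewrite mxE; apply: cvg_lim => //; rewrite -cvg_shiftS.
have -> : [sequence series (fun k =>
      ((k`!%:R)^-1 *: (E *m diag_mx beta *m Ft) ^+ k) i j) n.+1]_n =
    fun n => 1%:M i j + \sum_l c l * (series (exp_coeff (alpha 0 l * beta 0 l)) n.+1 - 1).
  apply/funext => n.
  have := congr1 (fun M : 'M[R]_nx => M i j) (lowrank_exp_series beta n).
  rewrite /series /= summxE => ->; rewrite mxE mul_diag_mx_mxE; congr (_ + _).
  by apply: eq_bigr => l _; rewrite mxE /c; ring.
apply: cvgD; first exact: cvg_cst.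
apply: cvg_big => [|l _]; first exact: add_continuous.
apply: cvgMl_tmp; apply: cvgB; last exact: cvg_cst.
by rewrite cvg_shiftS; exact: is_cvg_series_exp_coeff.
Qed.

Lemma mxRintegral_lowrank (A : R -> 'M[R]_nx) (f : 'I_nz -> R -> R) a b :
  (forall l, {within `[a, b], continuous (f l)}) ->
  {in `[a, b], forall t, A t = E *m diag_mx (\row_l f l t) *m Ft} ->
  mxRintegral A a b =
  E *m diag_mx (\row_l Rintegral lebesgue_measure `[a, b] (f l)) *m Ft.
Proof.
move=> f_cont AE; apply/matrixP => i j; rewrite mul_diag_mx_mxE /mxRintegral mxE.
have cont_int (g : R -> R) : {within `[a, b], continuous g} ->
    lebesgue_measure.-integrable `[a, b] (EFin \o g).
  by move=> g_cont; apply: continuous_compact_integrable => //; exact: segment_compact.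
transitivity (Rintegral lebesgue_measure `[a, b] (fun t => \sum_l E i l * Ft l j * f l t)).
  apply: eq_Rintegral => t; rewrite inE /= => t_in; rewrite AE // mul_diag_mx_mxE.
  by apply: eq_bigr => l _; rewrite mxE mulrAC.
rewrite Rintegral_sum // => [|l]; last first.
  apply: cont_int => t.
  apply: (@continuousM R (subspace `[a, b]) (cst (E i l * Ft l j)) (f l)).
    exact: cst_continuous.
  exact: f_cont.
by apply: eq_bigr => l _; rewrite mxE RintegralZl ?cont_int // mulrAC.
Qed.

End LowRank.

Lemma spd_unitmx (R : realType) n (M : 'M[R]_n) : spd M -> M \in unitmx.
Proof.
move=> [_ M_pos]; rewrite unitmxE unitfE; apply/negP => /det0P [v v_neq0 vM0].
have := M_pos v^T; rewrite trmx_eq0 => /(_ v_neq0).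
by rewrite trmxK vM0 mul0mx mxE ltxx.
Qed.

Lemma invmx_eq (R : comUnitRingType) n (A B : 'M[R]_n) : A *m B = 1%:M -> invmx A = B.
Proof.
move=> AB1; have [A_unit _] := mulmx1_unit AB1.
by rewrite -[RHS](mulKmx A_unit) AB1 mulmx1.
Qed.

Section Whitening.
Variables (R : realType) (nx nz : nat) (P : 'M[R]_nx) (H : 'M[R]_(nz, nx)).
Variables (Rm Rhalf V : 'M[R]_nz) (alpha : 'rV[R]_nz).
Hypotheses (Rhalf_unit : Rhalf \in unitmx) (RhalfK : Rhalf *m Rhalf = Rm).
Hypotheses (V_orth : V^T *m V = 1%:M)
  (D_eig : invmx Rhalf *m H *m P *m H^T *m invmx Rhalf = V *m diag_mx alpha *m V^T).

Let Rih := invmx Rhalf.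
Let E := P *m H^T *m Rih *m V.
Let Ft := V^T *m Rih *m H.

Lemma whitened_FtE : Ft *m E = diag_mx alpha.
Proof.
have -> : Ft *m E = V^T *m (Rih *m H *m P *m H^T *m Rih) *m V by rewrite !mulmxA.
by rewrite D_eig !mulmxA V_orth mul1mx -mulmxA V_orth mulmx1.
Qed.

Lemma whitened_gain : P *m H^T *m invmx Rm = E *m V^T *m Rih.
Proof.
have VVt : V *m V^T = 1%:M by apply: mulmx1C.
have -> : invmx Rm = Rih *m Rih.
  apply: invmx_eq.
  by rewrite -RhalfK -mulmxA (mulmxA Rhalf Rih) mulmxV // mul1mx mulmxV.
by rewrite -!mulmxA (mulmxA V) VVt mul1mx.
Qed.

Lemma Amat_whitened t : (forall i, 1 + t * alpha 0 i != 0) ->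
  Amat P Rm H t = E *m diag_mx (\row_i flow_rate (alpha 0 i) t) *m Ft.
Proof.
move=> q_neq0; have VVt : V *m V^T = 1%:M by apply: mulmx1C.
pose Q := diag_mx (\row_i (1 + t * alpha 0 i)).
pose Qi := diag_mx (\row_i (1 + t * alpha 0 i)^-1).
have QQi : Q *m Qi = 1%:M.
  rewrite mulmx_diag -diag_const_mx; congr diag_mx.
  by apply/rowP => i; rewrite !mxE mulfV.
have gram : t *: (H *m P *m H^T) + Rm = Rhalf *m V *m Q *m V^T *m Rhalf.
  have -> : H *m P *m H^T = Rhalf *m (Rih *m H *m P *m H^T *m Rih) *m Rhalf.
    by rewrite !mulmxA mulmxV // mul1mx -!mulmxA mulVmx // mulmx1.
  have -> : Q = 1%:M + t *: diag_mx alpha.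
    apply/matrixP => i j; rewrite !mxE.
    by case: eqP => _; rewrite ?mulr1n ?mulr0n ?mulr0 ?addr0.
  rewrite D_eig -RhalfK mulmxDr mulmxDl mulmxDl mulmx1 -(mulmxA Rhalf V) VVt mulmx1 addrC.
  by rewrite -scalemxAr -!scalemxAl !mulmxA.
have gram_inv : invmx (t *: (H *m P *m H^T) + Rm) = Rih *m V *m Qi *m V^T *m Rih.
  apply: invmx_eq; rewrite gram -!mulmxA (mulmxA Rhalf Rih) mulmxV // mul1mx.
  by rewrite (mulmxA V^T V) V_orth mul1mx (mulmxA Q) QQi mul1mx (mulmxA V) VVt mul1mx mulmxV.
have -> : diag_mx (\row_i flow_rate (alpha 0 i) t) = - 2^-1 *: Qi.
  by apply/matrixP => i j; rewrite !mxE mulrnAr.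
by rewrite /Amat gram_inv -scalemxAr -scalemxAl !mulmxA.
Qed.

End Whitening.

Section FlowField.
Variables (R : realType) (nx nz : nat) (E : 'M[R]_(nx, nz)) (Ft : 'M[R]_(nz, nx)).
Variable alpha : 'rV[R]_nz.
Hypothesis FtE : Ft *m E = diag_mx alpha.
Variables (t : R) (zt xt : 'cV[R]_nz).

Let D := diag_mx (\row_i flow_rate (alpha 0 i) t).
Let A := E *m D *m Ft.

Lemma flow_mx_push c (K : 'cV[R]_nz) :
  (1%:M + c *: A) *m (E *m K) = E *m (K + c *: (D *m diag_mx alpha *m K)).
Proof.
by rewrite mulmxDl mulmxDr !mul1mx -!scalemxAl -scalemxAr -!mulmxA (mulmxA Ft) FtE.
Qed.

Lemma flow_rhs_coords (X xbar : 'cV[R]_nx) : Ft *m xbar = xt ->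
  A *m X + (1%:M + (2 * t) *: A) *m ((1%:M + t *: A) *m (E *m zt) + A *m xbar) =
  E *m \col_i flow_field (alpha 0 i) t ((Ft *m X) i 0) (zt i 0) (xt i 0).
Proof.
move=> xtE; have AE Y : A *m Y = E *m (D *m (Ft *m Y)) by rewrite !mulmxA.
rewrite !AE xtE flow_mx_push -mulmxDr flow_mx_push -mulmxDr; congr (_ *m _).
apply/colP => i; rewrite /D mulmx_diag !mul_diag_mx !mxE /flow_field /=; ring.
Qed.

End FlowField.

Section Coordinates.
Variables (R : realType) (m n : nat) (M : 'M[R]_(m, n)) (x : R -> 'cV[R]_n).

Lemma mulmx_coordE i : (fun s => (M *m x s) i 0) = \sum_k (fun s => M i k * x s k 0).
Proof. by apply/funext => s; rewrite fct_sumE mxE. Qed.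

Lemma is_derive_mulmx_coord (dx : 'cV[R]_n) (t : R) i :
  (forall k, is_derive t 1 (fun s => x s k 0) (dx k 0)) ->
  is_derive t 1 (fun s => (M *m x s) i 0) ((M *m dx) i 0).
Proof.
move=> x'; rewrite mulmx_coordE mxE; exact: is_derive_eq.
Qed.

Lemma continuous_mulmx_coord (A : set R) i :
  (forall k, {within A, continuous (fun s => x s k 0)}) ->
  {within A, continuous (fun s => (M *m x s) i 0)}.
Proof.
move=> x_cont; rewrite mulmx_coordE.
elim/big_ind: _ => [|f g f_cont g_cont|k _] t; first exact: cst_continuous.
  exact: continuousD (f_cont t) (g_cont t).
by apply: continuousM; [exact: cst_continuous | exact: x_cont].
Qed.

End Coordinates.

Section FlowSolution.
Variables (R : realType) (nx nz : nat) (E : 'M[R]_(nx, nz)) (Ft : 'M[R]_(nz, nx)).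
Variables (alpha : 'rV[R]_nz) (zt xt : 'cV[R]_nz) (l0 l1 : R) (x : R -> 'cV[R]_nx).
Hypotheses (FtE : Ft *m E = diag_mx alpha) (alpha_gt0 : forall i, 0 < alpha 0 i).
Hypotheses (l0_ge0 : 0 <= l0) (l01 : l0 < l1).
Hypothesis x_cont : forall i, {within `[l0, l1], continuous (fun t => x t i 0)}.
Hypothesis x_der : {in `]l0, l1[, forall (t : R) i, is_derive t 1 (fun s => x s i 0)
  ((E *m \col_k flow_field (alpha 0 k) t ((Ft *m x t) k 0) (zt k 0) (xt k 0)) i 0)}.

Lemma flow_coord_endpoint i :
  (Ft *m x l1) i 0 = flow_sqrt (alpha 0 i) l0 / flow_sqrt (alpha 0 i) l1 * (Ft *m x l0) i 0
    + alpha 0 i * flow_gain (alpha 0 i) l0 l1 (zt i 0) (xt i 0).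
Proof.
apply: (flow_ode_endpoint (y := fun s => (Ft *m x s) i 0) (lt0r_neq0 (alpha_gt0 i)) l01).
- exact: flow_positive.
- exact: continuous_mulmx_coord.
- move=> t t_in; apply: is_derive_eq; first exact: is_derive_mulmx_coord (x_der t_in).
  by rewrite mulmxA FtE mul_diag_mx !mxE.
Qed.

Lemma flow_state_coords :
  x l1 = x l0 + E *m diag_mx (\row_i (alpha 0 i)^-1) *m (Ft *m x l1 - Ft *m x l0).
Proof.
pose N := 1%:M - E *m diag_mx (\row_i (alpha 0 i)^-1) *m Ft.
have NE : N *m E = 0.
  rewrite mulmxBl mul1mx -!mulmxA FtE mulmx_diag.
  suff -> : diag_mx (\row_j ((\row_i (alpha 0 i)^-1) 0 j * alpha 0 j)) = 1%:M.
    by rewrite mulmx1 subrr.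
  rewrite -diag_const_mx; congr diag_mx; apply/rowP => i.
  by rewrite !mxE mulVf ?gt_eqF.
have : N *m x l1 = N *m x l0.
  apply/colP => j; apply: (is_derive_0_itv_eq (f := fun s => (N *m x s) j 0) l01).
    move=> t t_in; apply: is_derive_eq; first exact: is_derive_mulmx_coord (x_der t_in).
    by rewrite mulmxA NE mul0mx mxE.
  exact: continuous_mulmx_coord.
rewrite /N !mulmxBl !mul1mx => /eqP; rewrite subr_eq => /eqP {1}->.
by rewrite mulmxBr !mulmxA addrAC -addrA.
Qed.

Lemma flow_transition :
  x l1 = (1%:M + E *m diag_mx (\row_i
            ((flow_sqrt (alpha 0 i) l0 / flow_sqrt (alpha 0 i) l1 - 1) / alpha 0 i)) *m Ft)
           *m x l0
         + E *m \col_i flow_gain (alpha 0 i) l0 l1 (zt i 0) (xt i 0).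
Proof.
rewrite {1}flow_state_coords mulmxDl mul1mx -addrA; congr (_ + _).
rewrite -!mulmxA -mulmxDr; congr (_ *m _).
apply/colP => i; have := flow_coord_endpoint i.
have s1_gt0 : 0 < flow_sqrt (alpha 0 i) l1.
  apply/flow_sqrt_gt0/(@flow_positive _ _ l0 l1 (alpha_gt0 i) l0_ge0).
  by rewrite bound_itvE; exact: ltW.
move: (Ft *m x l1) (Ft *m x l0) => y1 y0 y1E; rewrite !mul_diag_mx !mxE y1E.
by field; rewrite !gt_eqF.
Qed.

End FlowSolution.

Theorem mainTheorem4 (R : realType) (nx nz : nat)
  (P : 'M[R]_nx) (Rm : 'M[R]_nz) (H : 'M[R]_(nz, nx))
  (xbar : 'cV[R]_nx) (z : 'cV[R]_nz)
  (Rhalf : 'M[R]_nz) (V : 'M[R]_nz) (alpha : 'rV[R]_nz)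
  (l0 l1 : R) (x : R -> 'cV[R]_nx) :
  spd P -> spd Rm -> \rank H = nz ->
  (* Rhalf is the symmetric positive definite square root of Rm *)
  spd Rhalf -> Rhalf *m Rhalf = Rm ->
  (* D = R^{-1/2} H P H^T R^{-1/2} = V Lambda V^T, V orthogonal, alpha_i > 0 *)
  V^T *m V = 1%:M ->
  invmx Rhalf *m H *m P *m H^T *m invmx Rhalf = V *m diag_mx alpha *m V^T ->
  (forall i, 0 < alpha 0 i) ->
  0 <= l0 -> l0 < l1 -> l1 <= 1 ->
  (* x solves dx/dlambda = A(lambda) x + b(lambda) on [l0, l1] *)
  (forall i, {within `[l0, l1], continuous (fun t => x t i 0)}) ->
  (forall t, l0 < t < l1 -> forall i,
     is_derive t 1 (fun s => x s i 0)
       ((Amat P Rm H t *m x t + bvec P Rm H xbar z t) i 0)) ->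
  let Rih := invmx Rhalf in
  let E := P *m H^T *m Rih *m V in
  let Ft := V^T *m Rih *m H in
  let zt := V^T *m Rih *m z in
  let xt := Ft *m xbar in
  let s := fun (l : R) (i : 'I_nz) => Num.sqrt (1 + l * alpha 0 i) in
  let Omega := diag_mx (\row_i ((s l0 i / s l1 i - 1) / alpha 0 i)) in
  let c : 'cV[R]_nz := \col_i
      ((alpha 0 i * zt i 0 * (l1 * s l0 i - l0 * s l1 i)
        + xt i 0 * (s l0 i - s l1 i))
       / (alpha 0 i * s l1 i ^+ 2 * s l0 i)) in
  x l1 = (1%:M + E *m Omega *m Ft) *m x l0 + E *m c
  /\ 1%:M + E *m Omega *m Ft = expm (mxRintegral (Amat P Rm H) l0 l1).
Proof.
move=> _ _ _ Rhalf_spd RhalfK V_orth D_eig alpha_gt0 l0_ge0 l01 _ x_cont x_der.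
move=> Rih E Ft zt xt s Omega c.
have Rhalf_unit := spd_unitmx Rhalf_spd.
have FtE : Ft *m E = diag_mx alpha := whitened_FtE V_orth D_eig.
have q_gt0 i := @flow_positive _ _ l0 l1 (alpha_gt0 i) l0_ge0.
have A_lowrank : {in `[l0, l1], forall t,
    Amat P Rm H t = E *m diag_mx (\row_i flow_rate (alpha 0 i) t) *m Ft}.
  by move=> t t_in; apply: Amat_whitened => // i; rewrite lt0r_neq0 ?q_gt0.
split.
  apply: (flow_transition FtE alpha_gt0 l0_ge0 l01 x_cont) => t t_in i.
  rewrite -(flow_rhs_coords FtE _ _ _ (erefl xt)) -A_lowrank; last exact: subset_itv_oo_cc.
  have -> : E *m zt = P *m H^T *m invmx Rm *m z.
    by rewrite (whitened_gain _ _ Rhalf_unit RhalfK V_orth) !mulmxA.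
  by apply: x_der; move: t_in; rewrite in_itv.
rewrite (mxRintegral_lowrank (fun i => continuous_flow_rate (q_gt0 i)) A_lowrank).
rewrite (expm_lowrank FtE) => [|i]; last exact: lt0r_neq0.
congr (_ + _ *m diag_mx _ *m _); apply/rowP => i.
by rewrite !mxE expR_flow_rate_integral ?lt0r_neq0.
Qed.
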